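(* Let $d$ be a positive integer and let $K \le k \le d$ be non-negative integers. Let $\mathbf{b} \in \mathbb{R}^d$ be an arbitrary vector and let $\mathbf{a} \in \mathbb{R}^d$ be any $K$-sparse vector (i.e. $\mathbf{a}$ has at most $K$ non-zero entries). Define $$\rho = \frac{\min\{K, d-k\}}{k - K + \min\{K, d-k\}}, \qquad \nu = 1 + \frac{\rho + \sqrt{(4+\rho)\rho}}{2}.$$ Then $$\|\mathcal{H}_k(\mathbf{b}) - \mathbf{a}\|_2 \le \sqrt{\nu}\, \|\mathbf{b} - \mathbf{a}\|_2 .$$ Moreover, the bound is tight: there exist vectors $\mathbf{b}$ and $K$-sparse $\mathbf{a}$ for which equality holds.
   Context: For $\mathbf{v} \in \mathbb{R}^d$, the hard thresholding operator $\mathcal{H}_k(\mathbf{v})$ is the vector obtained from $\mathbf{v}$ by keeping its $k$ entries of largest absolute value and setting all other entries to zero (ties broken lexicographically). Thus $\mathcal{H}_k(\mathbf{v})$ is $k$-sparse. *)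

From mathcomp Require Import all_boot all_order all_algebra.
Set Implicit Arguments. Unset Strict Implicit. Unset Printing Implicit Defensive.
Import Order.TTheory GRing.Theory Num.Theory.
Local Open Scope ring_scope.

(* Position of index i in the ordering of indices by decreasing absolute
   value, ties broken lexicographically (smaller index first). *)
Definition ht_rank {R : realDomainType} {d : nat} (v : 'rV[R]_d) (i : 'I_d) : nat :=
  #|[set j : 'I_d | (`|v ord0 i| < `|v ord0 j|) || ((`|v ord0 j| == `|v ord0 i|) && (j < i)%N)]|.

Definition hard_threshold {R : realDomainType} {d : nat} (k : nat) (v : 'rV[R]_d)
  : 'rV[R]_d :=
  \row_(i < d) (if (ht_rank v i < k)%N then v ord0 i else 0).

Definition sparse {R : nzRingType} {d : nat} (K : nat) (v : 'rV[R]_d) : Prop :=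
  (#|[set i : 'I_d | v ord0 i != 0%R]| <= K)%N.

Definition norm2 {R : rcfType} {d : nat} (v : 'rV[R]_d) : R :=
  Num.sqrt (\sum_(i < d) v ord0 i ^+ 2).

Definition rho_const {R : rcfType} (d k K : nat) : R :=
  (minn K (d - k))%:R / ((k - K)%:R + (minn K (d - k))%:R).

Definition nu_const {R : rcfType} (d k K : nat) : R :=
  1 + (rho_const d k K + Num.sqrt ((4 + rho_const d k K) * rho_const d k K)) / 2.

(* Let S be the support of H_k(b), A that of a, and c = nu - 1, so that c^2 = rho (1 + c).
   Coordinatewise,
     c (H_k(b) - a)_i^2 + c^2 b_i^2 [i in S\A] <= c (1 + c) (b - a)_i^2 + (1 + c) b_i^2 [i in A\S],
   the difference on A\S being the square ((1 + c) b_i - c a_i)^2.  Every |b_j| with j in S\A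
   dominates every |b_i| with i in A\S, and counting gives |A\S| <= rho |S\A|, hence
   sum_{A\S} b^2 <= rho sum_{S\A} b^2 and the two correction terms cancel.  With
   M = min(K, d - k), equality holds for b the indicator of the first k + M coordinates and
   a equal to 1 on the first K - M, to 0 on the rest of the first k and to 1 + 1/c on the
   next M coordinates: then the square above vanishes and all entries of b on S\A and A\S
   are equal. *)

From mathcomp Require Import all_boot all_order all_algebra.
From mathcomp Require Import lra ring zify.
Set Implicit Arguments. Unset Strict Implicit. Unset Printing Implicit Defensive.
Import Order.TTheory GRing.Theory Num.Theory.
Local Open Scope ring_scope.

Lemma card_ord_ltn n k : (k <= n)%N -> #|[set r : 'I_n | (r < k)%N]| = k.
Proof.
move=> le_kn; have widen_inj : injective (widen_ord le_kn).
  by move=> x y /(congr1 val) eq_xy; apply: val_inj.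
rewrite -[RHS](card_ord k) -(card_imset _ widen_inj).
apply: eq_card => r; rewrite !inE; apply/idP/imsetP => [lt_rk|[x _ ->]].
  by exists (Ordinal lt_rk) => //; apply: val_inj.
exact: ltn_ord x.
Qed.

Section OrderRank.

Variables (I : finType) (lt : rel I).
Hypothesis ltT : transitive lt.
Hypothesis ltxx : irreflexive lt.
Hypothesis lt_total : forall i j, i != j -> lt i j || lt j i.

Definition order_rank (i : I) : nat := #|[set j | lt j i]|.

Lemma order_rank_lt i j : lt i j -> (order_rank i < order_rank j)%N.
Proof.
move=> lt_ij; apply: proper_card; apply/properP; split.
  by apply/subsetP => l; rewrite !inE => /ltT; apply.
by exists i; rewrite !inE ?lt_ij ?ltxx.
Qed.

Lemma order_rank_ltn i : (order_rank i < #|I|)%N.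
Proof.
rewrite -cardsT; apply: proper_card; apply/properP; split; first exact: subsetT.
by exists i; rewrite !inE ?ltxx.
Qed.

Lemma order_rank_inj : injective order_rank.
Proof.
move=> i j eq_ij; apply/eqP; apply: contraT => /lt_total.
by case/orP=> /order_rank_lt; rewrite eq_ij ltnn.
Qed.

Lemma card_order_rank_ltn k : (k <= #|I|)%N -> #|[set i | (order_rank i < k)%N]| = k.
Proof.
move=> le_k; pose f i : 'I_#|I| := Ordinal (order_rank_ltn i).
have f_inj : injective f by move=> i j /(congr1 val) /order_rank_inj.
rewrite -(card_imset _ f_inj) -[RHS](card_ord_ltn le_k); apply: eq_card => r.
rewrite !inE; apply/imsetP/idP => [[i] | lt_rk]; first by rewrite inE => ? ->.
have /codomP[i eq_r] := inj_card_onto f_inj (eq_leq (card_ord _)) r.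
by exists i; rewrite // inE; move: lt_rk; rewrite eq_r.
Qed.

End OrderRank.

Section HardThresholdSupport.

Variables (R : realDomainType) (d : nat) (v : 'rV[R]_d).

Definition ht_prec (j i : 'I_d) : bool :=
  (`|v ord0 i| < `|v ord0 j|) || ((`|v ord0 j| == `|v ord0 i|) && (j < i)%N).

Lemma ht_prec_trans : transitive ht_prec.
Proof.
move=> j l i; rewrite /ht_prec.
case/orP=> [lt1 | /andP[/eqP eq1 lt1]] /orP[lt2 | /andP[/eqP eq2 lt2]]; apply/orP.
- by left; apply: lt_trans lt2 lt1.
- by left; rewrite -eq2.
- by left; rewrite eq1.
- by right; rewrite eq1 eq2 eqxx (ltn_trans lt1 lt2).
Qed.

Lemma ht_prec_irr : irreflexive ht_prec.
Proof. by move=> i; rewrite /ht_prec ltxx ltnn andbF. Qed.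

Lemma ht_prec_total i j : i != j -> ht_prec i j || ht_prec j i.
Proof.
move=> neq_ij; rewrite /ht_prec.
case: (ltgtP `|v ord0 i| `|v ord0 j|) => //= _; rewrite ?orbT //.
by case: (ltngtP i j) => // /val_inj eq_ij; rewrite eq_ij eqxx in neq_ij.
Qed.

Definition ht_support k : {set 'I_d} := [set i | (ht_rank v i < k)%N].

Lemma card_ht_support k : (k <= d)%N -> #|ht_support k| = k.
Proof.
have := card_order_rank_ltn ht_prec_trans ht_prec_irr ht_prec_total.
by rewrite card_ord; apply.
Qed.

Lemma ht_support_dominates k i j :
  i \in ht_support k -> j \notin ht_support k -> `|v ord0 j| <= `|v ord0 i|.
Proof.
rewrite !inE => lt_ik; apply: contraR; rewrite -ltNge => lt_ij.
have /order_rank_lt lt_rank : ht_prec j i by rewrite /ht_prec lt_ij.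
exact: ltn_trans (lt_rank ht_prec_trans ht_prec_irr) lt_ik.
Qed.

Hypothesis v_nonincr : forall i j : 'I_d, (i <= j)%N -> `|v ord0 j| <= `|v ord0 i|.

Lemma ht_rank_nonincr i : ht_rank v i = i.
Proof.
rewrite -[RHS](card_ord_ltn (ltnW (ltn_ord i))); apply: eq_card => j; rewrite !inE.
have [lt_ji | le_ij] := ltnP j i.
  rewrite andbT; have := v_nonincr (ltnW lt_ji).
  by rewrite le_eqVlt => /orP[/eqP ->|->]; rewrite ?eqxx ?orbT.
by rewrite andbF orbF ltNge v_nonincr.
Qed.

Lemma hard_threshold_nonincr k :
  hard_threshold k v = \row_i (if (i < k)%N then v ord0 i else 0).
Proof. by apply/rowP => i; rewrite !mxE ht_rank_nonincr. Qed.

End HardThresholdSupport.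

Section ThresholdError.

Variables (R : realFieldType) (I : finType).

Lemma sum_sqr_le_ratio (x : I -> R) (T P : {set I}) (rho : R) :
  (forall i j, i \in T -> j \in P -> `|x i| <= `|x j|) -> 0 <= rho ->
  #|T|%:R <= rho * #|P|%:R ->
  \sum_(i in T) x i ^+ 2 <= rho * \sum_(j in P) x j ^+ 2.
Proof.
move=> dom rho_ge0 card_le.
have sum_ge0 (B : {set I}) : 0 <= \sum_(i in B) x i ^+ 2.
  by apply: sumr_ge0 => i _; apply: sqr_ge0.
have [P0 | P_gt0] := posnP #|P|.
  move: card_le; rewrite P0 mulr0 lern0 cards_eq0 => /eqP ->.
  by rewrite big_set0 mulr_ge0.
have cross : \sum_(j in P) \sum_(i in T) x i ^+ 2 <= \sum_(j in P) \sum_(i in T) x j ^+ 2.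
  apply: ler_sum => j jP; apply: ler_sum => i iT.
  rewrite -[x i ^+ 2]real_normK ?num_real // -[x j ^+ 2]real_normK ?num_real //.
  by rewrite ler_sqr ?nnegrE ?normr_ge0 ?dom.
have sumT_const j : \sum_(i in T) x j ^+ 2 = x j ^+ 2 *+ #|T| by rewrite sumr_const.
rewrite sumr_const (eq_bigr _ (fun j _ => sumT_const j)) sumrMnl in cross.
rewrite -[X in X <= _]mulr_natr -[X in _ <= X]mulr_natr in cross.
rewrite -(ler_pM2r (_ : 0 < #|P|%:R)) ?ltr0n //; apply: le_trans cross _.
by rewrite [rho * _]mulrC -mulrA ler_wpM2l.
Qed.

Variables (S A : {set I}) (b a : I -> R).
Hypothesis a_supp : forall i, i \notin A -> a i = 0.

Lemma threshold_err_subset : A \subset S ->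
  \sum_i ((if i \in S then b i else 0) - a i) ^+ 2 <= \sum_i (b i - a i) ^+ 2.
Proof.
move/subsetP=> sAS; apply: ler_sum => i _; case: ifP => iS //.
by rewrite a_supp ?subrr ?expr0n ?sqr_ge0 //; apply: contraFN iS => /sAS.
Qed.

Lemma threshold_err_weighted c : 0 <= c ->
  c * \sum_i ((if i \in S then b i else 0) - a i) ^+ 2
    + c ^+ 2 * \sum_(i in S :\: A) b i ^+ 2
  <= c * (1 + c) * \sum_i (b i - a i) ^+ 2 + (1 + c) * \sum_(i in A :\: S) b i ^+ 2.
Proof.
move=> c_ge0; rewrite !(big_mkcond (mem (_ :\: _))) !mulr_sumr -!big_split.
apply: ler_sum => i _ /=; rewrite !inE.
case: (boolP (i \in S)) => iS; case: (boolP (i \in A)) => iA /=.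
- by have := sqr_ge0 (b i - a i); nra.
- by rewrite a_supp // subr0; have := sqr_ge0 (b i); nra.
- by have := sqr_ge0 ((1 + c) * b i - c * a i); nra.
- by rewrite a_supp // subr0; have := sqr_ge0 (b i); nra.
Qed.

Lemma threshold_err_le rho c : 0 < c -> c ^+ 2 = rho * (1 + c) ->
  \sum_(i in A :\: S) b i ^+ 2 <= rho * \sum_(i in S :\: A) b i ^+ 2 ->
  \sum_i ((if i \in S then b i else 0) - a i) ^+ 2 <= (1 + c) * \sum_i (b i - a i) ^+ 2.
Proof.
move=> c_gt0 c_sqr ratio_le; rewrite -(ler_pM2l c_gt0) mulrA.
have := threshold_err_weighted (ltW c_gt0).
have : (1 + c) * \sum_(i in A :\: S) b i ^+ 2 <= c ^+ 2 * \sum_(i in S :\: A) b i ^+ 2.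
  by rewrite c_sqr [rho * _]mulrC -mulrA ler_pM2l // addr_gt0.
lra.
Qed.

Lemma threshold_err_dominated rho c : 0 <= c -> c ^+ 2 = rho * (1 + c) ->
  (forall i j, i \in A :\: S -> j \in S :\: A -> `|b i| <= `|b j|) ->
  #|A :\: S|%:R <= rho * #|S :\: A|%:R ->
  \sum_i ((if i \in S then b i else 0) - a i) ^+ 2 <= (1 + c) * \sum_i (b i - a i) ^+ 2.
Proof.
move=> c_ge0 c_sqr dom card_le.
have rho_ge0 : 0 <= rho by nra.
have [c0 | c_neq0] := eqVneq c 0; last first.
  have c_gt0 : 0 < c by rewrite lt_def c_neq0.
  apply: threshold_err_le c_gt0 c_sqr _.
  exact: sum_sqr_le_ratio dom rho_ge0 card_le.
have rho0 : rho = 0 by move: c_sqr; rewrite c0 addr0 mulr1 expr0n.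
move: card_le; rewrite rho0 mul0r lern0 cards_eq0 setD_eq0.
move/threshold_err_subset/le_trans; apply.
by rewrite c0 addr0 mul1r.
Qed.

End ThresholdError.

Lemma natr_le_ratio (R : realFieldType) (t M q p : nat) :
  (t <= M)%N -> (q + t <= p)%N -> t%:R <= M%:R / (q%:R + M%:R) * p%:R :> R.
Proof.
move=> le_tM le_p; rewrite -natrD.
have [qM0 | qM_gt0] := posnP (q + M).
  have -> : t = 0%N by lia.
  by rewrite mulr_ge0 ?divr_ge0.
by rewrite mulrAC ler_pdivlMr ?ltr0n // -!natrM ler_nat; nia.
Qed.

Section Constants.

Variables (R : rcfType) (d k K : nat).

Lemma rho_const_ge0 : 0 <= rho_const d k K :> R.
Proof. by rewrite /rho_const divr_ge0 // addr_ge0. Qed.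

Lemma nu_const_ge1 : 1 <= nu_const d k K :> R.
Proof. by rewrite /nu_const lerDl divr_ge0 // addr_ge0 ?sqrtr_ge0 ?rho_const_ge0. Qed.

Lemma nu_const_subr1_sqr :
  (nu_const d k K - 1) ^+ 2 = rho_const d k K * nu_const d k K :> R.
Proof.
rewrite /nu_const; set r := rho_const d k K; set s := Num.sqrt _.
have s_sqr : s ^+ 2 = (4 + r) * r.
  by rewrite sqr_sqrtr // mulr_ge0 ?addr_ge0 ?rho_const_ge0.
apply/eqP; rewrite -subr_eq0 (_ : _ - _ = (s ^+ 2 - (4 + r) * r) / 4).
  by rewrite s_sqr subrr mul0r.
by field.
Qed.

Lemma card_setD_le_rho (S A : {set 'I_d}) :
  (K <= k)%N -> #|S| = k -> (#|A| <= K)%N ->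
  #|A :\: S|%:R <= rho_const d k K * #|S :\: A|%:R :> R.
Proof.
move=> le_Kk card_S card_A; apply: natr_le_ratio.
  have : (#|A :\: S| <= #|~: S|)%N.
    by apply/subset_leq_card/subsetP => i; rewrite !inE => /andP[].
  have := cardsID S A; have := cardsC S; rewrite card_ord; lia.
by have := cardsID S A; have := cardsID A S; rewrite setIC; lia.
Qed.

End Constants.

Lemma hard_threshold_sqr_err (R : rcfType) (d K k : nat) (b a : 'rV[R]_d) :
  (K <= k)%N -> (k <= d)%N -> sparse K a ->
  \sum_i (hard_threshold k b - a) ord0 i ^+ 2 <= nu_const d k K * \sum_i (b - a) ord0 i ^+ 2.
Proof.
move=> le_Kk le_kd sparse_a.
set S := ht_support b k; set A := [set i | a ord0 i != 0].
have a_supp i : i \notin A -> a ord0 i = 0 by rewrite inE negbK => /eqP.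
have dom i j : i \in A :\: S -> j \in S :\: A -> `|b ord0 i| <= `|b ord0 j|.
  by move=> /setDP[_ iS] /setDP[jS _]; apply: ht_support_dominates jS iS.
have c_ge0 : 0 <= nu_const d k K - 1 :> R by rewrite subr_ge0 nu_const_ge1.
have c_sqr : (nu_const d k K - 1) ^+ 2 = rho_const d k K * (1 + (nu_const d k K - 1)) :> R.
  by rewrite [1 + _]addrC subrK nu_const_subr1_sqr.
have card_le := card_setD_le_rho R le_Kk (card_ht_support b le_kd) sparse_a.
have ht_sqr i : (hard_threshold k b - a) ord0 i ^+ 2 =
    ((if i \in S then b ord0 i else 0) - a ord0 i) ^+ 2 by rewrite !mxE inE.
have diff_sqr i : (b - a) ord0 i ^+ 2 = (b ord0 i - a ord0 i) ^+ 2 by rewrite !mxE.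
rewrite (eq_bigr _ (fun i _ => ht_sqr i)) (eq_bigr _ (fun i _ => diff_sqr i)).
apply: le_trans (threshold_err_dominated a_supp c_ge0 c_sqr dom card_le) _.
by rewrite [1 + _]addrC subrK.
Qed.

Lemma hard_threshold_indicator (R : realDomainType) (d k n : nat) :
  hard_threshold k (\row_(i < d) (i < n)%:R : 'rV[R]_d) = \row_(i < d) (i < minn k n)%:R.
Proof.
rewrite hard_threshold_nonincr => [|i j le_ij]; last first.
  rewrite !mxE !normr_nat ler_nat; case: (ltnP j n) => //.
  by move/(leq_ltn_trans le_ij) ->.
by apply/rowP => i; rewrite !mxE leq_min; case: ifP.
Qed.

Definition steps (V : nmodType) (n1 n2 n3 : nat) (x1 x2 x3 : V) (i : nat) : V :=
  if (i < n1)%N then x1 else if (i < n2)%N then x2 else if (i < n3)%N then x3 else 0.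

Lemma sum_steps (V : nmodType) (d n1 n2 n3 : nat) (x1 x2 x3 : V) :
  (n1 <= n2)%N -> (n2 <= n3)%N -> (n3 <= d)%N ->
  \sum_(i < d) steps n1 n2 n3 x1 x2 x3 i = x1 *+ n1 + x2 *+ (n2 - n1) + x3 *+ (n3 - n2).
Proof.
move=> le12 le23 le3d.
have segment m n x : (forall i, (m <= i < n)%N -> steps n1 n2 n3 x1 x2 x3 i = x) ->
    \sum_(m <= i < n) steps n1 n2 n3 x1 x2 x3 i = x *+ (n - m).
  by move=> const_x; rewrite (eq_big_nat _ _ const_x) sumr_const_nat.
rewrite -(big_mkord xpredT) (big_cat_nat (n := n3)) ?(leq_trans le12 le23) //=.
rewrite (big_cat_nat (n := n2)) ?(leq_trans le12) //= (big_cat_nat (n := n1)) //=.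
rewrite (segment 0 n1 x1) ?(segment n1 n2 x2) ?(segment n2 n3 x3) ?(segment n3 d 0).
all: try by rewrite mul0rn addr0 subn0.
all: by move=> i /andP[lo hi]; rewrite /steps; do ![case: ifP => ?]; try lia.
Qed.

Section ExtremalPair.

Variables (R : realDomainType) (d n1 n2 n3 : nat) (y : R).
Hypotheses (le12 : (n1 <= n2)%N) (le23 : (n2 <= n3)%N) (le3d : (n3 <= d)%N).

Local Notation b := (\row_(i < d) (i < n3)%:R : 'rV[R]_d).
Local Notation a := (\row_(i < d) steps n1 n2 n3 1 0 y i : 'rV[R]_d).

Lemma extremal_support_card : y != 0 -> #|[set i | a ord0 i != 0]| = (n1 + (n3 - n2))%N.
Proof.
move=> y_neq0; apply/eqP; rewrite -(eqr_nat R) -sumr_const big_mkcond /=.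
rewrite (eq_bigr (fun i : 'I_d => steps n1 n2 n3 1 0 1 i)) => [|i _].
  by rewrite sum_steps // mul0rn addr0 natrD.
rewrite inE mxE /steps.
case: (ltnP i n1) => ?; case: (ltnP i n2) => ?; case: (ltnP i n3) => ? //=;
  try lia; by rewrite ?eqxx ?oner_eq0 ?y_neq0.
Qed.

Lemma extremal_err_sqr :
  \sum_i (hard_threshold n2 b - a) ord0 i ^+ 2 = (n2 - n1)%:R + y ^+ 2 * (n3 - n2)%:R.
Proof.
rewrite hard_threshold_indicator (minn_idPl le23).
rewrite (eq_bigr (fun i : 'I_d => steps n1 n2 n3 0 1 (y ^+ 2) i)) => [|i _].
  by rewrite sum_steps // mul0rn add0r mulr_natr.
rewrite !mxE /steps.
case: (ltnP i n1) => ?; case: (ltnP i n2) => ?; case: (ltnP i n3) => ? //=;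
  try lia; by rewrite ?subrr ?subr0 ?sub0r ?sqrrN ?expr0n ?expr1n //= ?mulr0n.
Qed.

Lemma extremal_diff_sqr :
  \sum_i (b - a) ord0 i ^+ 2 = (n2 - n1)%:R + (1 - y) ^+ 2 * (n3 - n2)%:R.
Proof.
rewrite (eq_bigr (fun i : 'I_d => steps n1 n2 n3 0 1 ((1 - y) ^+ 2) i)) => [|i _].
  by rewrite sum_steps // mul0rn add0r mulr_natr.
rewrite !mxE /steps.
case: (ltnP i n1) => ?; case: (ltnP i n2) => ?; case: (ltnP i n3) => ? //=;
  try lia; by rewrite ?subrr ?subr0 ?sub0r ?sqrrN ?expr0n ?expr1n //= ?mulr0n.
Qed.

Lemma extremal_neq : (n2 < n3)%N -> y != 1 -> b != a.
Proof.
move=> lt23 y_neq1; have lt2d : (n2 < d)%N := leq_trans lt23 le3d.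
apply/eqP => /rowP/(_ (Ordinal lt2d)); rewrite !mxE /steps /= lt23 ltnn ifF //.
  by move=> /esym/eqP; rewrite (negbTE y_neq1).
by apply/negbTE; rewrite -leqNgt.
Qed.

End ExtremalPair.

Lemma hard_threshold_err_attained (R : rcfType) (d K k : nat) :
  (K <= k)%N -> (k <= d)%N -> (0 < minn K (d - k))%N ->
  exists (b a : 'rV[R]_d), [/\ sparse K a, b != a &
    \sum_i (hard_threshold k b - a) ord0 i ^+ 2 = nu_const d k K * \sum_i (b - a) ord0 i ^+ 2].
Proof.
move=> le_Kk le_kd; set M := minn K (d - k) => M_gt0.
have le_MK : (M <= K)%N by rewrite geq_minl.
have le_kMd : (k + M <= d)%N by have := geq_minr K (d - k); lia.
set c : R := nu_const d k K - 1; set Q : R := (k - K)%:R + M%:R.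
have Q_gt0 : 0 < Q by rewrite /Q -natrD ltr0n; lia.
have c_gt0 : 0 < c.
  have rho_gt0 : 0 < rho_const d k K :> R by rewrite divr_gt0 ?ltr0n.
  by rewrite /c /nu_const addrAC subrr add0r divr_gt0 // ltr_pwDl ?sqrtr_ge0.
have cQ : c ^+ 2 * Q = M%:R * (1 + c).
  by rewrite nu_const_subr1_sqr /rho_const -/M -/Q [1 + _]addrC subrK mulrAC divfK ?gt_eqF.
pose y := 1 + c^-1.
have le_KMk : (K - M <= k)%N by lia.
have le_kkM : (k <= k + M)%N by rewrite leq_addr.
exists (\row_(i < d) (i < k + M)%:R), (\row_(i < d) steps (K - M) k (k + M) 1 0 y i); split.
- by rewrite /sparse extremal_support_card ?gt_eqF ?addr_gt0 ?invr_gt0 //; lia.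
- apply: extremal_neq => //; first lia.
  by rewrite -subr_eq0 /y addrAC subrr add0r invr_eq0 gt_eqF.
- rewrite extremal_err_sqr // extremal_diff_sqr // addKn.
  rewrite (_ : k - (K - M) = k - K + M)%N; last lia.
  rewrite natrD -/Q -[nu_const d k K](subrK 1) -/c [c + 1]addrC /y.
  apply/eqP; rewrite -subr_eq0 (_ : _ - _ = (M%:R * (1 + c) - c ^+ 2 * Q) / c).
    by rewrite cQ subrr mul0r.
  by field; rewrite gt_eqF.
Qed.

Lemma hard_threshold_err_attained_degenerate (R : rcfType) (d K k : nat) :
  (0 < d)%N -> (0 < k)%N -> minn K (d - k) = 0%N ->
  exists (b a : 'rV[R]_d), [/\ sparse K a, b != a &
    \sum_i (hard_threshold k b - a) ord0 i ^+ 2 = nu_const d k K * \sum_i (b - a) ord0 i ^+ 2].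
Proof.
move=> d_gt0 k_gt0 M0.
have nu1 : nu_const d k K = 1 :> R.
  by rewrite /nu_const /rho_const M0 !mul0r mulr0 sqrtr0 addr0 mul0r addr0.
exists (\row_(i < d) (i < 1)%:R), 0; split.
- rewrite /sparse (_ : [set i | _] = set0) ?cards0 //.
  by apply/setP => i; rewrite !inE mxE eqxx.
- by apply/eqP => /rowP/(_ (Ordinal d_gt0)); rewrite !mxE => /eqP; rewrite oner_eq0.
- by rewrite hard_threshold_indicator (minn_idPr _) // nu1 mul1r.
Qed.

Lemma norm2_le_sqrt_scale (R : rcfType) (d : nat) (u w : 'rV[R]_d) (c : R) : 0 <= c ->
  \sum_i u ord0 i ^+ 2 <= c * \sum_i w ord0 i ^+ 2 -> norm2 u <= Num.sqrt c * norm2 w.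
Proof.
move=> c_ge0 le_uw; rewrite /norm2 -sqrtrM // ler_sqrt // mulr_ge0 // sumr_ge0 // => i _.
exact: sqr_ge0.
Qed.

Lemma norm2_eq_sqrt_scale (R : rcfType) (d : nat) (u w : 'rV[R]_d) (c : R) : 0 <= c ->
  \sum_i u ord0 i ^+ 2 = c * \sum_i w ord0 i ^+ 2 -> norm2 u = Num.sqrt c * norm2 w.
Proof. by move=> c_ge0 eq_uw; rewrite /norm2 -sqrtrM // eq_uw. Qed.

Theorem theorem1 (R : rcfType) (d K k : nat) :
  (0 < d)%N -> (K <= k)%N -> (k <= d)%N ->
  (forall (b a : 'rV[R]_d), sparse K a ->
     norm2 (hard_threshold k b - a) <= Num.sqrt (nu_const d k K) * norm2 (b - a))
  /\
  ((0 < k)%N ->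
   exists (b a : 'rV[R]_d), [/\ sparse K a, b != a &
     norm2 (hard_threshold k b - a) = Num.sqrt (nu_const d k K) * norm2 (b - a)]).
Proof.
move=> d_gt0 le_Kk le_kd.
have nu_ge0 : 0 <= nu_const d k K :> R := le_trans ler01 (nu_const_ge1 _ _ _ _).
split=> [b a sparse_a | k_gt0].
  exact/norm2_le_sqrt_scale/hard_threshold_sqr_err.
have [b [a [sparse_a neq_ba err_eq]]] : exists (b a : 'rV[R]_d), [/\ sparse K a, b != a &
    \sum_i (hard_threshold k b - a) ord0 i ^+ 2 = nu_const d k K * \sum_i (b - a) ord0 i ^+ 2].
  have [M0 | M_gt0] := posnP (minn K (d - k)).
    exact: hard_threshold_err_attained_degenerate.
  exact: hard_threshold_err_attained.
by exists b, a; split => //; apply: norm2_eq_sqrt_scale.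
Qed.
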